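(* Let $X$ be a real Banach space and let $Y\subset X^*$ be a $w^*$-dense linear subspace such that: (i) the locally convex space $(X,\mu(X,Y))$ is complete; (ii) for every absolutely convex $w^*$-compact set $K\subset Y$, every convex $w^*$-sequentially closed subset of $K$ is $w^*$-closed. Then $(Y,w^* )$ has the Mazur property, i.e. every linear functional $f:Y\to\mathbb{R}$ which is $w^*$-sequentially continuous is $w^*$-continuous.
   Context: $\mu(X,Y)$ denotes the Mackey topology on $X$ associated to the dual pair $\langle X,Y\rangle$: the locally convex topology of uniform convergence on all absolutely convex $w^*$-compact subsets of $Y$. A subset $C$ of a topological space is sequentially closed if no sequence in $C$ converges to a point outside $C$. $w^*$ denotes the weak$^*$ topology $w(X^*,X)$ (restricted to $Y$). *)

(* Elements of the dual X^* are represented as functions X -> R that are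
   linear and (norm-)continuous.  The weak* topology w(X^*,X) is written out
   explicitly via its basic neighbourhoods (finitely many points of X, eps). *)
From Stdlib Require List.
From HB Require Import structures.
From mathcomp Require Import all_boot all_order all_algebra.
From mathcomp Require Import all_classical all_reals all_analysis.
Set Implicit Arguments. Unset Strict Implicit. Unset Printing Implicit Defensive.
Import Order.TTheory GRing.Theory Num.Theory.
Import numFieldNormedType.Exports.
Local Open Scope classical_set_scope.
Local Open Scope ring_scope.

Section Defs.
Context {R : realType} {X : normedModType R}.

Definition lin_functional (phi : X -> R) : Prop :=
  forall (a : R) (u v : X), phi (a *: u + v) = a * phi u + phi v.

Definition in_dual (phi : X -> R) : Prop := lin_functional phi /\ continuous phi.

Definition dual_subspace (Y : set (X -> R)) : Prop :=
  (forall y, Y y -> in_dual y) /\ Y (fun _ => 0) /\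
  (forall (a : R) y z, Y y -> Y z -> Y (fun x => a * y x + z x)).

Definition wnbhd (s : seq X) (eps : R) (y z : X -> R) : Prop :=
  forall x, x \in s -> `|z x - y x| < eps.

Definition wstar_dense (Y : set (X -> R)) : Prop :=
  forall phi, in_dual phi -> forall (s : seq X) (eps : R), 0 < eps ->
    exists y, Y y /\ wnbhd s eps phi y.

Definition wstar_open (Y U : set (X -> R)) : Prop :=
  U `<=` Y /\ forall y, U y -> exists (s : seq X) (eps : R), 0 < eps /\
    forall z, Y z -> wnbhd s eps y z -> U z.

Definition wstar_closed (Y C : set (X -> R)) : Prop :=
  C `<=` Y /\ forall y, Y y ->
    (forall (s : seq X) (eps : R), 0 < eps -> exists z, C z /\ wnbhd s eps y z) ->
    C y.

Definition wstar_compact (Y K : set (X -> R)) : Prop :=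
  K `<=` Y /\ forall (I : Type) (U : I -> set (X -> R)),
    (forall i, wstar_open Y (U i)) -> K `<=` \bigcup_i U i ->
    exists J : seq I, forall y, K y -> exists i, List.In i J /\ U i y.

Definition abs_convex (K : set (X -> R)) : Prop :=
  forall (a b : R) y z, K y -> K z -> `|a| + `|b| <= 1 ->
    K (fun x => a * y x + b * z x).

Definition convex_fset (C : set (X -> R)) : Prop :=
  forall (t : R) y z, C y -> C z -> 0 <= t <= 1 ->
    C (fun x => t * y x + (1 - t) * z x).

Definition wstar_cvg (u : nat -> X -> R) (y : X -> R) : Prop :=
  forall x, (fun n => u n x) @ \oo --> y x.

Definition wstar_seq_closed (Y C : set (X -> R)) : Prop :=
  forall (u : nat -> X -> R) y, (forall n, C (u n)) -> Y y -> wstar_cvg u y -> C y.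

(* The sets defining the Mackey topology mu(X,Y) *)
Definition mackey_set (Y K : set (X -> R)) : Prop :=
  abs_convex K /\ wstar_compact Y K.

(* (X, mu(X,Y)) is complete: every Cauchy filter converges.
   mu(X,Y) = topology of uniform convergence on the mackey_sets K;
   its basic entourages are {(a,b) | sup_{y in K} |y (a - b)| <= eps}. *)
Definition mackey_complete (Y : set (X -> R)) : Prop :=
  forall F : set_system X, ProperFilter F ->
    (forall K, mackey_set Y K -> forall eps : R, 0 < eps ->
       exists A, F A /\ forall a b, A a -> A b -> forall y, K y -> `|y (a - b)| <= eps) ->
    exists x0, forall K, mackey_set Y K -> forall eps : R, 0 < eps ->
       F [set z | forall y, K y -> `|y (z - x0)| <= eps].

Definition lin_on (Y : set (X -> R)) (f : (X -> R) -> R) : Prop :=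
  forall (a : R) y z, Y y -> Y z -> f (fun x => a * y x + z x) = a * f y + f z.

Definition wstar_seq_continuous (Y : set (X -> R)) (f : (X -> R) -> R) : Prop :=
  forall (u : nat -> X -> R) y, (forall n, Y (u n)) -> Y y -> wstar_cvg u y ->
    f (u n) @[n --> \oo] --> f y.

Definition wstar_continuous (Y : set (X -> R)) (f : (X -> R) -> R) : Prop :=
  forall y, Y y -> forall eps : R, 0 < eps ->
    exists (s : seq X) (delta : R), 0 < delta /\
      forall z, Y z -> wnbhd s delta y z -> `|f z - f y| < eps.

Definition mazur_property (Y : set (X -> R)) : Prop :=
  forall f, lin_on Y f -> wstar_seq_continuous Y f -> wstar_continuous Y f.

End Defs.

(* For a w*-sequentially continuous linear functional f on Y and an absolutely
   convex w*-compact K, the set {z in K | f z >= eps} is convex and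
   w*-sequentially closed, hence w*-closed by (ii); as it misses 0, f is
   eps-small on the elements of K vanishing on some finite s in X.  Induction
   on s, each step a one-dimensional Hahn-Banach interval argument, yields
   x in X with |f - ev_x| <= eps on K.  Since sums of Mackey sets are Mackey
   sets, these points form a mu(X,Y)-Cauchy filter; its limit x0, given by
   (i), satisfies f = ev_x0 on Y, so f is w*-continuous. *)

From Stdlib Require List.
From mathcomp Require Import all_boot all_order all_algebra.
From mathcomp Require Import all_classical all_reals all_analysis.
From mathcomp Require Import ring lra.
Set Implicit Arguments. Unset Strict Implicit. Unset Printing Implicit Defensive.
Import Order.TTheory GRing.Theory Num.Theory.
Import numFieldNormedType.Exports.
Local Open Scope classical_set_scope.
Local Open Scope ring_scope.

Lemma mem_In {T : eqType} (x : T) (s : seq T) : x \in s -> List.In x s.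
Proof. by elim: s => [|a s IH] //=; rewrite in_cons => /predU1P[->|/IH]; [left|right]. Qed.

Lemma near_all_In {T A : Type} (F : set_system T) (J : seq A) (P : A -> T -> Prop) :
  Filter F -> (forall j, List.In j J -> \forall t \near F, P j t) ->
  \forall t \near F, forall j, List.In j J -> P j t.
Proof.
move=> FF; elim: J => [|j J IH] PJ; first by apply: nearW => t j [].
apply: filter_app2 (PJ j (or_introl erefl)) (IH (fun i Ji => PJ i (or_intror Ji))).
by apply: nearW => t Pj PJt i [<-|]; [exact: Pj | exact: PJt].
Qed.

Section WeakStarTopology.
Context {R : realType} {X : normedModType R}.
Implicit Types (s : seq X) (e : R) (y z w : X -> R) (Y P C K : set (X -> R)).

Lemma wnbhd_refl s e y : 0 < e -> wnbhd s e y y.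
Proof. by move=> e0 x _; rewrite subrr normr0. Qed.

Lemma sub_wnbhd s s' e e' y z :
  {subset s' <= s} -> e <= e' -> wnbhd s e y z -> wnbhd s' e' y z.
Proof. by move=> ss' ee' yz x /ss' /yz /lt_le_trans; apply. Qed.

Lemma wnbhd_trans s e1 e2 y z w :
  wnbhd s e1 y z -> wnbhd s e2 z w -> wnbhd s (e1 + e2) y w.
Proof.
move=> yz zw x xs; apply: le_lt_trans (ler_distD (z x) _ _) _.
by rewrite addrC ltrD // ?yz ?zw.
Qed.

Lemma wnbhd_add s e1 e2 y1 y2 z1 z2 :
  wnbhd s e1 y1 z1 -> wnbhd s e2 y2 z2 ->
  wnbhd s (e1 + e2) (fun x => y1 x + y2 x) (fun x => z1 x + z2 x).
Proof.
move=> yz1 yz2 x xs; rewrite opprD addrACA.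
by apply: le_lt_trans (ler_normD _ _) _; rewrite ltrD ?yz1 ?yz2.
Qed.

Definition wstar_nbhd Y y P : Prop :=
  exists s e, 0 < e /\ forall z, Y z -> wnbhd s e y z -> P z.

Global Instance wstar_nbhd_filter Y y : Filter (wstar_nbhd Y y).
Proof.
split.
- by exists [::], 1.
- move=> P Q [s1 [e1 [e1_gt0 P1]]] [s2 [e2 [e2_gt0 Q2]]].
  exists (s1 ++ s2), (Num.min e1 e2); split; first by rewrite lt_min e1_gt0.
  move=> z Yz yz; split; [apply: P1 | apply: Q2] => //; apply: sub_wnbhd yz.
  + by move=> x xs; rewrite mem_cat xs.
  + by rewrite ge_min lexx.
  + by move=> x xs; rewrite mem_cat xs orbT.
  + by rewrite ge_min lexx orbT.
- move=> P Q PQ [s [e [e0 HP]]]; exists s, e; split => // z Yz yz.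
  exact/PQ/HP.
Qed.

Definition wstar_interior Y P := [set y | Y y /\ wstar_nbhd Y y P].

Lemma wstar_interior_sub Y P : wstar_interior Y P `<=` P.
Proof. by move=> y [Yy [s [e [e0 HP]]]]; apply: HP => //; exact: wnbhd_refl. Qed.

Lemma wstar_interior_open Y P : wstar_open Y (wstar_interior Y P).
Proof.
split=> [y []//|y [Yy [s [e [e0 HP]]]]].
exists s, (e / 2); split=> [|z Yz yz]; first by rewrite divr_gt0.
split=> //; exists s, (e / 2); split=> [|w Yw zw]; first by rewrite divr_gt0.
by apply: HP => //; rewrite [e]splitr; exact: wnbhd_trans zw.
Qed.

Lemma wstar_closed_nbhdC Y C y :
  wstar_closed Y C -> Y y -> ~ C y -> wstar_nbhd Y y (~` C).
Proof.
move=> [_ Ccl] Yy nCy; apply: contrapT => nN; apply/nCy/Ccl => // s e e0.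
apply: contrapT => nz; apply: nN; exists s, e; split=> // z _ yz Cz.
by apply: nz; exists z.
Qed.

Lemma wstar_compact_nbhd_cover Y K (V : (X -> R) -> set (X -> R)) :
  wstar_compact Y K -> (forall y, K y -> wstar_nbhd Y y (V y)) ->
  exists J : seq (X -> R), forall z, K z -> exists2 y, List.In y J & K y /\ V y z.
Proof.
move=> [KY Kc] KV.
pose U y := wstar_interior Y [set z | K y /\ V y z].
have cover : K `<=` \bigcup_y U y.
  move=> y Ky; exists y => //; split; first exact: KY.
  by apply: filterS (KV y Ky) => z; split.
have [J JU] := Kc _ U (fun y => wstar_interior_open _ _) cover.
by exists J => z /JU[y [Jy /wstar_interior_sub[Ky Vyz]]]; exists y.
Qed.

Lemma wstar_compact_tube Y K1 K2 (N : (X -> R) * (X -> R) -> seq X * R) :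
  wstar_compact Y K1 -> wstar_compact Y K2 ->
  (forall p, K1 p.1 -> K2 p.2 -> 0 < (N p).2) ->
  exists P : seq ((X -> R) * (X -> R)), forall a b, K1 a -> K2 b ->
    exists2 p, List.In p P &
      [/\ K1 p.1, K2 p.2, wnbhd (N p).1 (N p).2 p.1 a & wnbhd (N p).1 (N p).2 p.2 b].
Proof.
move=> cK1 cK2 N_gt0.
have /choice[J2 HJ2] y1 : exists J2 : seq (X -> R), K1 y1 -> forall b, K2 b ->
    exists2 y2, List.In y2 J2 & K2 y2 /\ wnbhd (N (y1, y2)).1 (N (y1, y2)).2 y2 b.
  have [K1y1|] := pselect (K1 y1); last by exists [::].
  have nbhd2 y2 : K2 y2 -> wstar_nbhd Y y2 (wnbhd (N (y1, y2)).1 (N (y1, y2)).2 y2).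
    move=> K2y2; exists (N (y1, y2)).1, (N (y1, y2)).2; split=> [|z _ //].
    exact: N_gt0 (y1, y2) K1y1 K2y2.
  by have [J2 HJ2] := wstar_compact_nbhd_cover cK2 nbhd2; exists J2.
have [J1 HJ1] : exists J1 : seq (X -> R), forall a, K1 a -> exists2 y1, List.In y1 J1 &
    K1 y1 /\ forall y2, List.In y2 (J2 y1) -> K2 y2 ->
      wnbhd (N (y1, y2)).1 (N (y1, y2)).2 y1 a.
  apply: wstar_compact_nbhd_cover cK1 _ => y1 K1y1.
  apply: (near_all_In (F := wstar_nbhd Y y1)
    (P := fun y2 a => K2 y2 -> wnbhd (N (y1, y2)).1 (N (y1, y2)).2 y1 a)) => y2 _.
  have [K2y2|nK2y2] := pselect (K2 y2); last exact: nearW.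
  exists (N (y1, y2)).1, (N (y1, y2)).2; split=> [|z _ y1z _ //].
  exact: N_gt0 (y1, y2) K1y1 K2y2.
exists (List.flat_map (fun y1 => List.map (pair y1) (J2 y1)) J1) => a b Ka Kb.
have [y1 J1y1 [K1y1 y1a]] := HJ1 a Ka.
have [y2 J2y2 [K2y2 y2b]] := HJ2 y1 K1y1 b Kb.
exists (y1, y2); last by split=> //; exact: y1a.
by apply/List.in_flat_map; exists y1; split=> //; exact: List.in_map.
Qed.

Lemma wstar_compact_seq_closed Y K : wstar_compact Y K -> wstar_seq_closed Y K.
Proof.
move=> cK u y Ku Yy uy; apply: contrapT => nKy.
have /choice[xs zy_xs] z : exists x, K z -> z x != y x.
  have [Kz|] := pselect (K z); last by exists 0.
  apply: contrapT => /forallNP zy; apply: nKy; suff <- : z = y by [].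
  by apply: funext => x; apply: contrapT => zyx; apply: (zy x) => _; exact/eqP.
pose d z : R := `|z (xs z) - y (xs z)|.
have d_gt0 z : K z -> 0 < d z by move=> /zy_xs; rewrite normr_gt0 subr_eq0.
have d2_gt0 z : K z -> 0 < d z / 2 by move=> /d_gt0 dz; rewrite divr_gt0.
have [J JK] : exists J : seq (X -> R), forall w, K w ->
    exists2 z, List.In z J & K z /\ `|w (xs z) - z (xs z)| < d z / 2.
  apply: wstar_compact_nbhd_cover cK _ => z Kz.
  exists [:: xs z], (d z / 2); split=> [|w _ zw]; first exact: d2_gt0.
  exact: zw _ (mem_head _ _).
have uyJ : \forall n \near \oo, forall z, List.In z J ->
    K z -> `|y (xs z) - u n (xs z)| < d z / 2.
  apply: near_all_In => z _; have [Kz|nKz] := pselect (K z); last first.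
    by apply: nearW.
  by apply: filterS (cvgr_dist_lt _ _ (uy (xs z)) _ (d2_gt0 z Kz)) => n + _.
have [n /= uyn] := filter_ex uyJ.
have [z Jz [Kz zu]] := JK _ (Ku n).
have := uyn z Jz Kz; rewrite distrC => yu; rewrite distrC in zu.
have := ler_distD (u n (xs z)) (z (xs z)) (y (xs z)).
by rewrite -/(d z) => /le_lt_trans/(_ (ltrD zu yu)); rewrite -splitr ltxx.
Qed.

Lemma near_wstar_nbhd {T : topologicalType} Y P (phi : T -> X -> R) t :
  (forall x, continuous (phi^~ x)) -> wstar_nbhd Y (phi t) P ->
  \forall t' \near t, Y (phi t') -> P (phi t').
Proof.
move=> phic [s [e [e0 HP]]].
have near_s : \forall t' \near t, forall x, List.In x s -> `|phi t x - phi t' x| < e.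
  by apply: near_all_In => x _; exact: cvgr_dist_lt _ _ (phic x t) _ e0.
apply: filterS near_s => t' near_t Yt'; apply: HP => // x /mem_In/near_t.
by rewrite distrC.
Qed.

Lemma wstar_compact_image {T : ptopologicalType} Y (A : set T) (phi : T -> X -> R) :
  compact A -> (forall t, A t -> Y (phi t)) -> (forall x, continuous (phi^~ x)) ->
  wstar_compact Y (phi @` A).
Proof.
rewrite compact_cover => cA AY phic.
split=> [_ [t At <-]|I U Uo cov]; first exact: AY.
have [[t0 At0]|A0] := pselect (A !=set0); last first.
  by exists [::] => y [t At _]; case: A0; exists t.
have [i0 _ _] := cov _ (imageP phi At0).
have /choice[i Ui] t : exists i, A t -> U i (phi t).
  have [At|nAt] := pselect (A t); last by exists i0.
  by have [i _ Ui] := cov _ (imageP phi At); exists i.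
pose V t := [set t' | Y (phi t') -> U (i t) (phi t')]°.
have AV : A `<=` cover A V.
  move=> t At; exists t => //; apply: near_wstar_nbhd => //.
  exact: (Uo (i t)).2 _ (Ui t At).
have [D' D'A AD'] := cA T A V (fun t _ => open_interior _) AV.
exists (List.map i (finmap.enum_fset D')) => _ [t At <-].
have [t' D't' Vt't] := AD' t At.
exists (i t'); split; first exact/List.in_map/mem_In.
by apply: (interior_subset Vt't); exact: AY.
Qed.

End WeakStarTopology.

Section ApproximationByEvaluations.
Context {R : realType} {X : normedModType R}.
Implicit Types (L : set (X -> R)) (g v : (X -> R) -> R) (y z w : X -> R).

Definition linear_on L g : Prop :=
  forall a b y z, L y -> L z -> g (fun x => a * y x + b * z x) = a * g y + b * g z.

Lemma linear_onS L L' g : L `<=` L' -> linear_on L' g -> linear_on L g.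
Proof. by move=> LL' g_lin a b y z /LL' Ly /LL' Lz; exact: g_lin. Qed.

Lemma linear_on0 L g z : linear_on L g -> L z -> g (fun _ => 0) = 0.
Proof.
move=> g_lin Lz; have := g_lin 0 0 z z Lz Lz; rewrite !mul0r addr0.
by under eq_fun do rewrite !mul0r addr0.
Qed.

Lemma linear_onN L g z : linear_on L g -> L z -> g (fun x => - z x) = - g z.
Proof.
move=> g_lin Lz; have := g_lin (-1) 0 z z Lz Lz; rewrite mul0r addr0 mulN1r.
by under eq_fun do rewrite mul0r addr0 mulN1r.
Qed.

Lemma abs_convex0 L z : abs_convex L -> L z -> L (fun _ => 0).
Proof.
move=> Lac Lz; have := Lac 0 0 z z Lz Lz; rewrite normr0 addr0 ler01.
by under eq_fun do rewrite !mul0r addr0; apply.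
Qed.

Lemma abs_convexN L z : abs_convex L -> L z -> L (fun x => - z x).
Proof.
move=> Lac Lz; have := Lac (-1) 0 z z Lz Lz; rewrite normrN normr1 normr0 addr0.
by under eq_fun do rewrite mul0r addr0 mulN1r; apply.
Qed.

Lemma lin_functional0 (phi : X -> R) : lin_functional phi -> phi 0 = 0.
Proof.
move=> phi_lin; have := phi_lin 1 0 0; rewrite scaler0 addr0 mul1r.
by move/eqP; rewrite -subr_eq subrr eq_sym => /eqP.
Qed.

Lemma lin_functionalB (phi : X -> R) a b :
  lin_functional phi -> phi (a - b) = phi a - phi b.
Proof. by move=> phi_lin; rewrite addrC -scaleN1r phi_lin mulN1r addrC. Qed.

Section SmallOnKernel.
Variables (L : set (X -> R)) (g v : (X -> R) -> R) (eps : R).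
Hypotheses (Lac : abs_convex L) (g_lin : linear_on L g) (v_lin : linear_on L v).
Hypothesis g_small : forall z, L z -> v z = 0 -> `|g z| <= eps.

(* [v w *: z - v z *: w] lies in the kernel of [v], and after rescaling in [L]. *)
Lemma kernel_cross_bound z w : L z -> L w -> 0 < v z -> 0 < v w ->
  `|v w * g z - v z * g w| <= eps * (v z + v w).
Proof.
move=> Lz Lw vz_gt0 vw_gt0; have S_gt0 : 0 < v z + v w by rewrite addr_gt0.
set a := v w / (v z + v w); set b := - v z / (v z + v w).
have Lq : L (fun x => a * z x + b * w x).
  apply: Lac => //; rewrite !normrM normrN !gtr0_norm ?invr_gt0 //.
  by rewrite -mulrDl addrC divff // gt_eqF.
have vq : v (fun x => a * z x + b * w x) = 0.
  by rewrite v_lin // /a /b; field; rewrite gt_eqF.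
have := g_small Lq vq; rewrite g_lin // /a /b.
have -> : v w / (v z + v w) * g z + - v z / (v z + v w) * g w =
    (v w * g z - v z * g w) / (v z + v w) by field; rewrite gt_eqF.
by rewrite normrM [`|_^-1|]gtr0_norm ?invr_gt0 // ler_pdivrMr.
Qed.

(* Helly's theorem on the line: the intervals
   [[(g z - eps) / v z, (g z + eps) / v z]], [v z > 0], meet pairwise, so their
   intersection contains the supremum of the left endpoints. *)
Lemma small_on_kernel_approx_multiple :
  exists c, forall z, L z -> `|g z - c * v z| <= eps.
Proof.
suff [c Hc] : exists c, forall z, L z -> 0 < v z -> `|g z - c * v z| <= eps.
  exists c => z Lz; case: (ltgtP (v z) 0) => [vz_lt0|vz_gt0|vz0].
  - have := Hc _ (abs_convexN Lac Lz).
    rewrite !(linear_onN _ Lz) // oppr_gt0 => /(_ vz_lt0).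
    by rewrite mulrN opprK -opprB normrN addrC.
  - exact: Hc.
  - by rewrite vz0 mulr0 subr0; exact: g_small.
have [[w Lw vw_gt0]|nopos] := pselect (exists2 w, L w & 0 < v w); last first.
  by exists 0 => z Lz vz_gt0; case: nopos; exists z.
pose S := [set (g z - eps) / v z | z in [set z | L z /\ 0 < v z]].
have S_ub z : L z -> 0 < v z -> ubound S ((g z + eps) / v z).
  move=> Lz vz_gt0 _ [z' [Lz' vz'_gt0] <-].
  rewrite ler_pdivrMr // mulrAC ler_pdivlMr //.
  have := kernel_cross_bound Lz Lz' vz_gt0 vz'_gt0; rewrite ler_norml => /andP[+ _].
  nra.
have S_sup : has_sup S.
  by split; [exists ((g w - eps) / v w), w | exists ((g w + eps) / v w); exact: S_ub].
exists (sup S) => z Lz vz_gt0.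
have := sup_upper_bound S_sup (imageP (fun z => (g z - eps) / v z) (conj Lz vz_gt0)).
have := ge_sup S_sup.1 (S_ub z Lz vz_gt0).
rewrite ler_pdivrMr // ler_pdivlMr // => hi lo.
by rewrite ler_norml; apply/andP; split; lra.
Qed.

End SmallOnKernel.

Lemma small_on_annihilator_approx_eval L g eps (s : seq X) :
  (forall z, L z -> lin_functional z) -> abs_convex L -> linear_on L g ->
  (forall z, L z -> (forall x, x \in s -> z x = 0) -> `|g z| <= eps) ->
  exists x0, forall z, L z -> `|g z - z x0| <= eps.
Proof.
elim: s L g => [|x1 s IH] L g L_lin Lac g_lin g_small.
  exists 0 => z Lz; rewrite lin_functional0 ?subr0; last exact: L_lin.
  by apply: g_small => // x; rewrite in_nil.
pose L' := [set z | L z /\ forall x, x \in s -> z x = 0].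
have [c Hc] : exists c, forall z, L' z -> `|g z - c * z x1| <= eps.
  apply: small_on_kernel_approx_multiple => [a b y z [Ly ys] [Lz zs] ab1| | |].
  - by split=> [|x xs]; [exact: Lac | rewrite ys // zs // !mulr0 addr0].
  - by apply: linear_onS g_lin => z [].
  - by [].
  - move=> z [Lz zs] zx1; apply: g_small => // x.
    by rewrite in_cons => /predU1P[->|]; [|exact: zs].
have g'_lin : linear_on L (fun z => g z - c * z x1).
  by move=> a b y z Ly Lz; rewrite g_lin //; ring.
have [x' Hx'] := IH L _ L_lin Lac g'_lin (fun z Lz zs => Hc z (conj Lz zs)).
exists (c *: x1 + x') => z Lz.
by rewrite L_lin // opprD addrA; exact: Hx'.
Qed.

End ApproximationByEvaluations.

Section MackeySets.
Context {R : realType} {X : normedModType R} (Y : set (X -> R)).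
Hypothesis Ysub : dual_subspace Y.
Implicit Types (y z : X -> R) (K : set (X -> R)).

Lemma dual_subspace_lin y : Y y -> lin_functional y.
Proof. by move=> /Ysub.1[]. Qed.

Lemma dual_subspace0 : Y (fun _ => 0).
Proof. by case: Ysub => _ []. Qed.

Lemma dual_subspaceZ a y : Y y -> Y (fun x => a * y x).
Proof.
move=> Yy; have := Ysub.2.2 a _ _ Yy dual_subspace0.
by under eq_fun do rewrite addr0.
Qed.

Lemma dual_subspace_lincomb a b y z : Y y -> Y z -> Y (fun x => a * y x + b * z x).
Proof. by move=> Yy /(dual_subspaceZ b); exact: Ysub.2.2. Qed.

Lemma dual_subspaceD y z : Y y -> Y z -> Y (fun x => y x + z x).
Proof.
by move=> Yy /(dual_subspace_lincomb 1 1 Yy); under eq_fun do rewrite !mul1r.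
Qed.

Lemma lin_on_linear_on f : lin_on Y f -> linear_on Y f.
Proof.
move=> f_lin.
have f0 : f (fun _ => 0) = 0.
  have := f_lin 1 _ _ dual_subspace0 dual_subspace0; rewrite !mul1r addr0.
  by move/eqP; rewrite -subr_eq subrr eq_sym => /eqP.
have fZ b z : Y z -> f (fun x => b * z x) = b * f z.
  move=> Yz; have := f_lin b _ _ Yz dual_subspace0; rewrite f0 addr0.
  by under eq_fun do rewrite addr0.
by move=> a b y z Yy Yz; rewrite f_lin ?fZ //; exact: dual_subspaceZ.
Qed.

Definition sym_segment y := [set (fun x => t * y x) | t in `[-1, 1]].

Lemma sym_segment0 y : sym_segment y (fun _ => 0).
Proof.
exists 0; first by rewrite /= in_itv /= lerN10 ler01.
by apply: funext => x; rewrite mul0r.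
Qed.

Lemma sym_segment_id y : sym_segment y y.
Proof.
exists 1; first by rewrite /= in_itv /= lexx (le_trans (lerN10 _) ler01).
by apply: funext => x; rewrite mul1r.
Qed.

Lemma sym_segment_mackey y : Y y -> mackey_set Y (sym_segment y).
Proof.
move=> Yy; split.
  move=> a b _ _ [t1 t1_le1 <-] [t2 t2_le1 <-] ab_le1.
  exists (a * t1 + b * t2); last by apply: funext => x; ring.
  move: t1_le1 t2_le1; rewrite /= !in_itv /= -!ler_norml => t1_le1 t2_le1.
  apply: le_trans (ler_normD _ _) (le_trans _ ab_le1); rewrite !normrM.
  by rewrite lerD // ler_piMr.
apply: wstar_compact_image; first exact: segment_compact.
  by move=> t _; exact: dual_subspaceZ.
by move=> x; exact: mulrr_continuous.
Qed.

Definition mackey_sum K1 K2 := [set (fun x => y1 x + y2 x) | y1 in K1 & y2 in K2].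

Lemma mackey_suml K1 K2 y : K2 (fun _ => 0) -> K1 y -> mackey_sum K1 K2 y.
Proof. by exists y => //; exists (fun _ => 0) => //; apply: funext => x; rewrite addr0. Qed.

Lemma mackey_sumr K1 K2 y : K1 (fun _ => 0) -> K2 y -> mackey_sum K1 K2 y.
Proof. by exists (fun _ => 0) => //; exists y => //; apply: funext => x; rewrite add0r. Qed.

Lemma abs_convex_sum K1 K2 :
  abs_convex K1 -> abs_convex K2 -> abs_convex (mackey_sum K1 K2).
Proof.
move=> K1ac K2ac a b _ _ [y1 Ky1 [y2 Ky2 <-]] [z1 Kz1 [z2 Kz2 <-]] ab_le1.
exists (fun x => a * y1 x + b * z1 x); first exact: K1ac.
exists (fun x => a * y2 x + b * z2 x); first exact: K2ac.
by apply: funext => x; ring.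
Qed.

Lemma wstar_compact_sum K1 K2 :
  wstar_compact Y K1 -> wstar_compact Y K2 -> wstar_compact Y (mackey_sum K1 K2).
Proof.
move=> cK1 cK2; split=> [z [y1 /cK1.1 Yy1 [y2 /cK2.1 Yy2 <-]]|I U Uo cov].
  exact: dual_subspaceD.
have [[z0 [a0 Ka0 [b0 Kb0 _]]]|S0] := pselect (mackey_sum K1 K2 !=set0); last first.
  by exists [::] => z Sz; case: S0; exists z.
have [i0 _ _] := cov _ (ex_intro2 _ _ a0 Ka0 (ex_intro2 _ _ b0 Kb0 erefl)).
have /choice[q Hq] (p : (X -> R) * (X -> R)) : exists q : I * (seq X * R),
    K1 p.1 -> K2 p.2 -> 0 < q.2.2 /\
    forall z, Y z -> wnbhd q.2.1 q.2.2 (fun x => p.1 x + p.2 x) z -> U q.1 z.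
  have [[K1p K2p]|nK] := pselect (K1 p.1 /\ K2 p.2); last first.
    by exists (i0, ([::], 1)) => K1p K2p; case: nK.
  have [i _ Ui] := cov _ (ex_intro2 _ _ p.1 K1p (ex_intro2 _ _ p.2 K2p erefl)).
  by have [s [e [e_gt0 He]]] := (Uo i).2 _ Ui; exists (i, (s, e)).
have [P HP] := wstar_compact_tube (N := fun p => ((q p).2.1, (q p).2.2 / 2)) cK1 cK2
  (fun p K1p K2p => divr_gt0 (Hq p K1p K2p).1 (ltr0Sn _ 1)).
exists (List.map (fun p => (q p).1) P) => z [a Ka [b Kb <-]].
have [p Pp [K1p K2p pa pb]] := HP a b Ka Kb.
exists (q p).1; split; first exact: List.in_map.
apply: (Hq p K1p K2p).2; first exact: dual_subspaceD (cK1.1 _ Ka) (cK2.1 _ Kb).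
by rewrite [(q p).2.2]splitr; exact: wnbhd_add pa pb.
Qed.

Lemma mackey_setD K1 K2 :
  mackey_set Y K1 -> mackey_set Y K2 -> mackey_set Y (mackey_sum K1 K2).
Proof.
move=> [K1ac cK1] [K2ac cK2].
by split; [exact: abs_convex_sum | exact: wstar_compact_sum].
Qed.

End MackeySets.

Section EvaluationLimit.
Context {R : realType} {X : normedModType R} (Y : set (X -> R)).
Hypothesis Ysub : dual_subspace Y.
Variable f : (X -> R) -> R.
Implicit Types (K : set (X -> R)) (eps : R).

Definition approx_set K eps := [set x : X | forall y, K y -> `|f y - y x| <= eps].

Lemma approx_set_close K eps a b y : K `<=` Y ->
  approx_set K eps a -> approx_set K eps b -> K y -> `|y (a - b)| <= eps + eps.
Proof.
move=> KY Ka Kb Ky.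
rewrite lin_functionalB; last exact (dual_subspace_lin Ysub (KY _ Ky)).
have -> : y a - y b = (f y - y b) - (f y - y a) by ring.
by apply: le_trans (ler_normB _ _) _; rewrite lerD ?Ka ?Kb.
Qed.

Definition approx_filter : set_system X :=
  filter_from
    [set Ke : set (X -> R) * R | [/\ mackey_set Y Ke.1, Ke.1 (fun _ => 0) & 0 < Ke.2]]
    (fun Ke => approx_set Ke.1 Ke.2).

Hypothesis approx_set_nonempty :
  forall K eps, mackey_set Y K -> 0 < eps -> approx_set K eps !=set0.

Lemma approx_filter_proper : ProperFilter approx_filter.
Proof.
apply: filter_from_proper => [|[K eps] [MK _ eps_gt0]]; last exact: approx_set_nonempty.
apply: filter_from_filter.
  exists (sym_segment (fun _ => 0), 1); split=> //.
  - exact: (sym_segment_mackey Ysub (dual_subspace0 Ysub)).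
  - exact: sym_segment0.
move=> [K1 e1] [K2 e2] [MK1 K1_0 e1_gt0] [MK2 K2_0 e2_gt0].
exists (mackey_sum K1 K2, Num.min e1 e2).
  split=> /=; first exact: mackey_setD.
  - exact: mackey_suml.
  - by rewrite lt_min e1_gt0.
move=> x /= Sx; split=> y Ky.
- by apply: le_trans (Sx y (mackey_suml K2_0 Ky)) _; rewrite ge_min lexx.
- by apply: le_trans (Sx y (mackey_sumr K1_0 Ky)) _; rewrite ge_min lexx orbT.
Qed.

Lemma approx_filter_cauchy K : mackey_set Y K -> forall eps, 0 < eps ->
  exists A, approx_filter A /\
    forall a b, A a -> A b -> forall y, K y -> `|y (a - b)| <= eps.
Proof.
move=> MK eps eps_gt0; have FF := approx_filter_proper.
have [[y0 Ky0]|K0] := pselect (K !=set0); last first.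
  by exists setT; split=> [|a b _ _ y Ky]; [exact: filterT | case: K0; exists y].
exists (approx_set K (eps / 2)); split.
  exists (K, eps / 2) => //.
  by split; [done | exact: abs_convex0 MK.1 Ky0 | rewrite divr_gt0].
move=> a b Ka Kb y Ky; rewrite [eps]splitr.
exact: approx_set_close MK.2.1 Ka Kb Ky.
Qed.

Lemma mackey_complete_eval : mackey_complete Y -> exists x0, forall y, Y y -> f y = y x0.
Proof.
move=> Ycomplete; have FF := approx_filter_proper.
have [x0 Fx0] := Ycomplete _ FF approx_filter_cauchy.
exists x0 => y Yy; apply/eqP; rewrite -subr_eq0 -normr_le0.
apply/ler_addgt0Pr => eps eps_gt0; rewrite add0r.
have seg_y := sym_segment_mackey Ysub Yy.
have Fapprox : approx_filter (approx_set (sym_segment y) (eps / 2)).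
  exists (sym_segment y, eps / 2) => //.
  by split; [| exact: sym_segment0 | rewrite divr_gt0].
have [z [zx0 yz]] :=
  filter_ex (filterI (Fx0 _ seg_y _ (divr_gt0 eps_gt0 (ltr0Sn _ 1))) Fapprox).
have {zx0}zx0 := zx0 y (sym_segment_id y); have {yz}yz := yz y (sym_segment_id y).
rewrite lin_functionalB in zx0; last exact (dual_subspace_lin Ysub Yy).
have -> : f y - y x0 = (f y - y z) + (y z - y x0) by ring.
by apply: le_trans (ler_normD _ _) _; rewrite [eps]splitr lerD.
Qed.

End EvaluationLimit.

Section SequentiallyContinuousFunctional.
Context {R : realType} {X : normedModType R} (Y : set (X -> R)).
Hypothesis Ysub : dual_subspace Y.
Hypothesis convex_seq_closed_closed : forall K, mackey_set Y K ->
  forall C, C `<=` K -> convex_fset C -> wstar_seq_closed Y C -> wstar_closed Y C.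
Variable f : (X -> R) -> R.
Hypotheses (f_lin : lin_on Y f) (f_seq : wstar_seq_continuous Y f).
Implicit Types (K : set (X -> R)) (eps : R).

Lemma superlevel_wstar_closed K eps :
  mackey_set Y K -> wstar_closed Y [set z | K z /\ eps <= f z].
Proof.
move=> [Kac cK]; have fK := linear_onS cK.1 (lin_on_linear_on Ysub f_lin).
apply: convex_seq_closed_closed (conj Kac cK) _ _ _ _.
- by move=> z [].
- move=> t y z [Ky fy] [Kz fz] /andP[t_ge0 t_le1]; split.
    by apply: Kac; rewrite // ger0_norm // ger0_norm ?subr_ge0 // addrC subrK.
  by rewrite fK //; nra.
- move=> u y Cu Yy uy; split.
    exact: wstar_compact_seq_closed cK _ _ (fun n => (Cu n).1) Yy uy.
  apply: closed_cvg (@closed_ge _ eps) _ _ (f_seq (fun n => cK.1 _ (Cu n).1) Yy uy).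
  by apply: nearW => n; case: (Cu n).
Qed.

Lemma mackey_small_on_annihilator K eps : mackey_set Y K -> 0 < eps ->
  exists s : seq X, forall z, K z -> (forall x, x \in s -> z x = 0) -> `|f z| <= eps.
Proof.
move=> MK eps_gt0; have fK := linear_onS MK.2.1 (lin_on_linear_on Ysub f_lin).
have f0 := linear_on0 (lin_on_linear_on Ysub f_lin) (dual_subspace0 Ysub).
have notC0 : ~ [set z | K z /\ eps <= f z] (fun _ => 0).
  by case=> _; rewrite f0 leNgt eps_gt0.
have [s [e [e_gt0 sC]]] :=
  wstar_closed_nbhdC (superlevel_wstar_closed eps MK) (dual_subspace0 Ysub) notC0.
have f_lt w : K w -> (forall x, x \in s -> w x = 0) -> f w < eps.
  move=> Kw ws; rewrite ltNge; apply/negP => fw; apply: (sC w) (conj Kw fw).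
    exact: MK.2.1.
  by move=> x xs; rewrite ws // subrr normr0.
exists s => z Kz zs; have := f_lt z Kz zs.
have Nzs x : x \in s -> - z x = 0 by move=> /zs ->; rewrite oppr0.
have := f_lt _ (abs_convexN MK.1 Kz) Nzs.
by rewrite (linear_onN fK Kz) ler_norml => ? ?; apply/andP; split; lra.
Qed.

Lemma mackey_approx_eval K eps :
  mackey_set Y K -> 0 < eps -> approx_set f K eps !=set0.
Proof.
move=> MK eps_gt0; have [s fs] := mackey_small_on_annihilator MK eps_gt0.
have K_lin z : K z -> lin_functional z by move/MK.2.1; exact: dual_subspace_lin.
have fK := linear_onS MK.2.1 (lin_on_linear_on Ysub f_lin).
by have [x0 fx0] := small_on_annihilator_approx_eval K_lin MK.1 fK fs; exists x0.
Qed.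

End SequentiallyContinuousFunctional.

Theorem proposition3p1 (R : realType) (X : completeNormedModType R)
  (Y : set (X -> R)) :
  dual_subspace Y ->
  wstar_dense Y ->
  mackey_complete Y ->
  (forall K, mackey_set Y K ->
     forall C, C `<=` K -> convex_fset C -> wstar_seq_closed Y C -> wstar_closed Y C) ->
  mazur_property Y.
Proof.
move=> Ysub _ Ycomplete convex_seq_closed_closed f f_lin f_seq.
have [x0 fx0] := mackey_complete_eval Ysub
  (mackey_approx_eval Ysub convex_seq_closed_closed f_lin f_seq) Ycomplete.
move=> y Yy eps eps_gt0; exists [:: x0], eps; split=> // z Yz yz.
by rewrite !fx0 //; apply: yz; rewrite mem_seq1.
Qed.
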